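(* Let $T_\sigma$ be a binary separating tree of a separable permutation $\sigma$ of size $k$ and $\tau$ a permutation of size $n$. The dynamic programming algorithm that computes, for all nodes $V$ of $T_\sigma$ (in postfix order) and all $1\le i\le j\le n$, $1\le a\le b\le n$, the entries $M(V,i,j,a,b)$ defined below, storing each entry as an explicit pattern and evaluating each $\mathrm{Longest}$ by exhaustive search over the indicated pairs $(h,c)$, and outputs $M(\text{root},1,n,1,n)$, runs in time $\mathcal{O}(\min(k,n)\,k\,n^6)$. The entries are: $M(V,i,j,a,b)=\epsilon$ if $i>j$ or $a>b$; for a leaf $V$, $M(V,i,j,a,b)=1$ if some $h\in\{i,\dots,j\}$ has $a\le\tau_h\le b$ and $\epsilon$ otherwise; for an internal node with children $V_L,V_R$, $M(V,i,j,a,b)=\mathrm{Longest}\{M(V_L,i,h-1,a,c-1)\oplus M(V_R,h,j,c,b)\}$ if $V$ is labeled $+$ and $\mathrm{Longest}\{M(V_L,i,h-1,c,b)\ominus M(V_R,h,j,a,c-1)\}$ if labeled $-$, both over $i\le h\le j+1$, $a\le c\le b+1$.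
   Context: A permutation is separable if it avoids the patterns $3\,1\,4\,2$ and $2\,4\,1\,3$ ($\pi$ is a pattern of $\sigma$ if some subsequence of $\sigma$ is order-isomorphic to $\pi$). A binary separating tree of $\sigma=\sigma_1\cdots\sigma_k$ is an ordered binary tree with $k$ leaves (read left to right as $\sigma_1,\dots,\sigma_k$), internal nodes labeled $+$ or $-$, such that the entries below each node have values forming an interval and, at a $+$ (resp. $-$) node, values below the left child are all smaller (resp. larger) than those below the right child; it has $\mathcal{O}(k)$ nodes. $\epsilon$ is the empty pattern. For patterns $\pi$ of length $k$ and $\pi'$ of length $k'$: $\pi\oplus\pi'=\pi_1\cdots\pi_k(\pi'_1+k)\cdots(\pi'_{k'}+k)$ and $\pi\ominus\pi'=(\pi_1+k')\cdots(\pi_k+k')\pi'_1\cdots\pi'_{k'}$. $\mathrm{Longest}(S)$ returns an element of maximal length of the set $S$ of patterns. *)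

From mathcomp Require Import all_boot.
Set Implicit Arguments. Unset Strict Implicit. Unset Printing Implicit Defensive.

(* Patterns / permutations are sequences of positive naturals (1-based values). *)

Definition is_perm (s : seq nat) (k : nat) : Prop := perm_eq s (iota 1 k).

Definition order_iso (s t : seq nat) : Prop :=
  size s = size t /\
  forall i j, i < size s -> j < size s ->
    (nth 0 s i < nth 0 s j) = (nth 0 t i < nth 0 t j).

Definition contains (s pi : seq nat) : Prop :=
  exists m : bitseq, size m = size s /\ order_iso (mask m s) pi.

Definition separable (s : seq nat) : Prop :=
  ~ contains s [:: 3; 1; 4; 2] /\ ~ contains s [:: 2; 4; 1; 3].

(* Binary trees with internal nodes labeled + (true) or - (false) *)
Inductive septree : Type :=
| Leaf : septree
| Node : bool -> septree -> septree -> septree.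

Fixpoint nleaves (T : septree) : nat :=
  match T with
  | Leaf => 1
  | Node _ L R => nleaves L + nleaves R
  end.

Definition is_interval (s : seq nat) : Prop :=
  uniq s /\ forall x y z, x \in s -> y \in s -> x <= z <= y -> z \in s.

Fixpoint sep_tree_of (T : septree) (s : seq nat) : Prop :=
  match T with
  | Leaf => size s = 1 /\ is_interval s
  | Node sg L R =>
      let s1 := take (nleaves L) s in
      let s2 := drop (nleaves L) s in
      size s = nleaves L + nleaves R /\ is_interval s /\
      sep_tree_of L s1 /\ sep_tree_of R s2 /\
      (forall x y, x \in s1 -> y \in s2 -> if sg then x < y else y < x)
  end.

Definition oplus (p q : seq nat) : seq nat := p ++ map (fun x => x + size p) q.
Definition ominus (p q : seq nat) : seq nat := map (fun x => x + size q) p ++ q.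

(* Longest S: an element of maximal length (first one met); epsilon if empty *)
Definition Longest (S : seq (seq nat)) : seq nat :=
  foldl (fun best p => if size best < size p then p else best) [::] S.

(* tau_h, 1-based *)
Definition tauh (tau : seq nat) (h : nat) : nat := nth 0 tau h.-1.

Definition pairs (i j a b : nat) : seq (nat * nat) :=
  [seq (h, c) | h <- iota i (j.+2 - i), c <- iota a (b.+2 - a)].

Fixpoint M (T : septree) (tau : seq nat) (i j a b : nat) : seq nat :=
  if (j < i) || (b < a) then [::] else
  match T with
  | Leaf => if has (fun h => a <= tauh tau h <= b) (iota i (j.+1 - i))
            then [:: 1] else [::]
  | Node sg L R =>
      if sg then
        Longest [seq oplus (M L tau i p.1.-1 a p.2.-1) (M R tau p.1 j p.2 b)
                | p <- pairs i j a b]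
      else
        Longest [seq ominus (M L tau i p.1.-1 p.2 b) (M R tau p.1 j a p.2.-1)
                | p <- pairs i j a b]
  end.

Definition dp_output (T : septree) (tau : seq nat) (n : nat) : seq nat :=
  M T tau 1 n 1 n.

(* Cost model (unit cost per elementary step, patterns stored explicitly):
   - an entry with i > j or a > b costs 1;
   - a leaf entry costs a scan over h in i..j, plus 1;
   - an internal entry costs, for each pair (h,c), the construction of the
     concatenated pattern (sizes of both child entries) plus 1 for the
     length comparison of Longest, plus the cost of storing the result. *)
Definition entry_cost (T : septree) (tau : seq nat) (i j a b : nat) : nat :=
  if (j < i) || (b < a) then 1 else
  match T with
  | Leaf => (j.+1 - i) + 1
  | Node sg L R =>
      \sum_(p <- pairs i j a b)
         ((if sg then size (M L tau i p.1.-1 a p.2.-1) + size (M R tau p.1 j p.2 b)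
           else size (M L tau i p.1.-1 p.2 b) + size (M R tau p.1 j a p.2.-1)) + 1)
      + size (M T tau i j a b) + 1
  end.

Definition node_cost (T : septree) (tau : seq nat) (n : nat) : nat :=
  \sum_(1 <= i < n.+1) \sum_(i <= j < n.+1)
    \sum_(1 <= a < n.+1) \sum_(a <= b < n.+1) entry_cost T tau i j a b.

Fixpoint total_cost (T : septree) (tau : seq nat) (n : nat) : nat :=
  match T with
  | Leaf => node_cost T tau n
  | Node _ L R => total_cost L tau n + total_cost R tau n + node_cost T tau n
  end.

From mathcomp Require Import all_boot.
From mathcomp Require Import zify.

(* A leaf contributes at most one letter to an entry M(V,i,j,a,b), and the
   split points h cut the positions i..j into disjoint ranges, so every entry
   has length at most min(#leaves of V, j - i + 1) <= min(k, n).  An internal entry examines at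
   most (n+1)^2 pairs (h, c), each costing O(min(k, n)), so one entry costs
   O(min(k, n) n^2); a node has at most n^4 entries and the tree has 2k - 1
   nodes, which gives O(min(k, n) k n^6). *)

Lemma leq_sum_bound (I : eqType) (s : seq I) (F : I -> nat) N B :
  size s <= N -> (forall x, x \in s -> F x <= B) -> \sum_(x <- s) F x <= N * B.
Proof.
move=> size_s F_le; apply: leq_trans (leq_mul size_s (leqnn B)).
rewrite -sum1_size big_distrl /= !big_seq.
by apply: leq_sum => x x_s; rewrite mul1n F_le.
Qed.

Lemma size_Longest_le S B :
  all (fun p => size p <= B) S -> size (Longest S) <= B.
Proof.
rewrite /Longest; have : size ([::] : seq nat) <= B by [].
elim: S [::] => [|p S IH] best best_le //= /andP[p_le S_le].
by apply: IH S_le; case: ifP.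
Qed.

Lemma size_pairs i j a b : size (pairs i j a b) = (j.+2 - i) * (b.+2 - a).
Proof. by rewrite size_allpairs !size_iota. Qed.

Lemma mem_pairs i j a b h c :
  (h, c) \in pairs i j a b -> i <= h <= j.+1 /\ a <= c <= b.+1.
Proof.
case/allpairsP=> [[h' c'] [/= h'_in c'_in [-> ->]]].
by move: h'_in c'_in; rewrite !mem_iota; lia.
Qed.

Arguments mem_pairs {i j a b h c}.

Lemma minn_split_le x y {i h j} : i <= h <= j.+1 ->
  minn x (h - i) + minn y (j.+1 - h) <= minn (x + y) (j.+1 - i).
Proof. lia. Qed.

Lemma size_M_le T tau i j a b : 0 < i ->
  size (M T tau i j a b) <= minn (nleaves T) (j.+1 - i).
Proof.
elim: T i j a b => [|sg L IHL R IHR] i j a b i_gt0 /=; case: ifP => //= /negbT range.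
  by case: has => //=; lia.
have split_le h c x y x' y' : (h, c) \in pairs i j a b ->
    size (M L tau i h.-1 x y) + size (M R tau h j x' y')
    <= minn (nleaves L + nleaves R) (j.+1 - i).
  case/mem_pairs=> h_range _; have h_gt0 : 0 < h by lia.
  have := IHL i h.-1 x y i_gt0; rewrite prednK // => L_le.
  exact: leq_trans (leq_add L_le (IHR h j x' y' h_gt0)) (minn_split_le _ _ h_range).
by case: sg; apply: size_Longest_le; apply/allP => _ /mapP[[h c] hc ->];
  rewrite size_cat size_map (split_le _ c).
Qed.

Lemma size_M_split_le L R tau i j h x y x' y' : 0 < i -> i <= h <= j.+1 ->
  size (M L tau i h.-1 x y) + size (M R tau h j x' y')
  <= minn (nleaves L + nleaves R) (j.+1 - i).
Proof.
move=> i_gt0 h_range; have h_gt0 : 0 < h by lia.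
have := size_M_le L tau i h.-1 x y i_gt0; rewrite prednK // => L_le.
exact: leq_trans (leq_add L_le (size_M_le R tau h j x' y' h_gt0)) (minn_split_le _ _ h_range).
Qed.

Lemma nleaves_gt0 T : 0 < nleaves T.
Proof. by elim: T => //= _ L IHL R IHR; rewrite addn_gt0 IHL. Qed.

Lemma entry_cost_le T tau k n i j a b : nleaves T <= k ->
  1 <= i <= j -> j <= n -> 1 <= a <= b -> b <= n ->
  entry_cost T tau i j a b <= 10 * minn k n * n ^ 2.
Proof.
move=> T_k /andP[i_gt0 ij] jn /andP[a_gt0 ab] bn.
have := nleaves_gt0 T; set m := minn k n => T_gt0.
have m_gt0 : 0 < m by rewrite /m; lia.
rewrite /entry_cost; case: ifP => [_|/negbT range]; first by nia.
case: T T_k {T_gt0} range => [|sg L R] /= T_k range; first by nia.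
have sum_le : \sum_(p <- pairs i j a b)
    ((if sg then size (M L tau i p.1.-1 a p.2.-1) + size (M R tau p.1 j p.2 b)
      else size (M L tau i p.1.-1 p.2 b) + size (M R tau p.1 j a p.2.-1)) + 1)
    <= (n.+1 * n.+1) * m.+1.
  apply: leq_sum_bound => [|[h c] /mem_pairs[h_range _]].
    by rewrite size_pairs leq_mul //; lia.
  rewrite addn1 ltnS; case: sg;
    by apply: leq_trans (size_M_split_le L R tau _ _ _ _ _ _ _ i_gt0 h_range) _; lia.
have size_le : size (M (Node sg L R) tau i j a b) <= m.
  by have := size_M_le (Node sg L R) tau i j a b i_gt0; rewrite /m /=; lia.
by apply: leq_trans (leq_add (leq_add sum_le size_le) (leqnn 1)) _; nia.
Qed.

Lemma node_cost_le T tau k n : nleaves T <= k ->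
  node_cost T tau n <= 10 * minn k n * n ^ 6.
Proof.
move=> T_k; rewrite /node_cost.
set E := 10 * minn k n * n ^ 2.
apply: (@leq_trans (n * (n * (n * (n * E))))); last by rewrite /E !expnS expn0; lia.
apply: leq_sum_bound => [|i]; first by rewrite size_iota; lia.
rewrite mem_index_iota => i_range.
apply: leq_sum_bound => [|j]; first by rewrite size_iota; lia.
rewrite mem_index_iota => j_range.
apply: leq_sum_bound => [|a]; first by rewrite size_iota; lia.
rewrite mem_index_iota => a_range.
apply: leq_sum_bound => [|b]; first by rewrite size_iota; lia.
rewrite mem_index_iota => b_range.
by apply: entry_cost_le => //; lia.
Qed.

(* A full binary tree with l leaves has 2l - 1 nodes. *)
Lemma total_cost_le T tau k n : nleaves T <= k ->
  total_cost T tau n <= (2 * nleaves T).-1 * (10 * minn k n * n ^ 6).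
Proof.
elim: T => [|sg L IHL R IHR] /= T_k; first by rewrite !mul1n node_cost_le.
have := nleaves_gt0 L; have := nleaves_gt0 R.
have := IHL ltac:(lia); have := IHR ltac:(lia).
have := @node_cost_le (Node sg L R) tau k n T_k.
set X := 10 * minn k n * n ^ 6 => node_le R_le L_le R_gt0 L_gt0.
have -> : (2 * (nleaves L + nleaves R)).-1 =
          (2 * nleaves L).-1 + (2 * nleaves R).-1 + 1 by lia.
by rewrite !mulnDl mul1n !leq_add.
Qed.

Lemma size_sep_tree T s : sep_tree_of T s -> size s = nleaves T.
Proof. by case: T => [|sg L R] /= []. Qed.

Arguments size_sep_tree {T s}.

Theorem proposition4 :
  exists C : nat, forall (k n : nat) (sigma tau : seq nat) (T : septree),
    is_perm sigma k -> separable sigma -> sep_tree_of T sigma ->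
    is_perm tau n ->
    total_cost T tau n <= C * minn k n * k * n ^ 6.
Proof.
exists 20 => k n sigma tau T sigma_perm _ T_sigma _.
have nleaves_k : nleaves T = k.
  by rewrite -(size_sep_tree T_sigma) (perm_size sigma_perm) size_iota.
apply: leq_trans (total_cost_le T tau k n (eq_leq nleaves_k)) _.
rewrite nleaves_k; set X := 10 * minn k n * n ^ 6.
have -> : 20 * minn k n * k * n ^ 6 = (2 * k) * X by rewrite /X; lia.
by rewrite leq_mul // leq_pred.
Qed.
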